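(* There is an absolute constant $C>0$ such that the following holds. Let $n,N,m,\sigma\in\mathbb{N}$ and $\delta\in(0,1)$, and let $\vec{F}\in\mathbb{C}^{n\times n}$ be the unitary discrete Fourier matrix. For each $i\in[N]$, let $\vec{B}_i\in\mathbb{C}^{m\times n}$ be formed by sampling $m$ rows of $\vec{F}$ uniformly and independently at random, multiplying each sampled row by an independent uniformly random sign, and rescaling the rows by $m^{-1/2}$; the matrices $\vec{B}_1,\dots,\vec{B}_N$ are mutually independent. If $$m\ge C\,\sigma\,\delta^{-2}\log(n)^4\log(N),$$ then with probability at least $1-n^{-\log(n)^3}$ the collection $(\vec{B}_i)_{i\in[N]}$ is pairwise $(\delta,\sigma)$-incoherent.
   Context: $[N]=\{1,\dots,N\}$; $\langle\cdot,\cdot\rangle$ and $\|\cdot\|$ denote the Euclidean inner product and norm, and $|\vec{v}|_0$ the number of nonzero entries of $\vec{v}$. A collection of matrices $\vec{B}_i\in\mathbb{K}^{m\times n_i}$, $i\in[N]$, is pairwise $(\delta,\sigma)$-incoherent (with $\sigma=(\sigma_1,\dots,\sigma_N)$, or a single number $\sigma$ meaning $\sigma_i=\sigma$ for all $i$) if for all $i\ne j$, $$\sup\{|\langle\vec{B}_i\vec{v}_i,\vec{B}_j\vec{v}_j\rangle| : |\vec{v}_i|_0\le\sigma_i,\ |\vec{v}_j|_0\le\sigma_j,\ \|\vec{v}_i\|=\|\vec{v}_j\|=1\}\le\delta.$$ *)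

From HB Require Import structures.
From mathcomp Require Import all_boot all_order all_algebra.
From mathcomp Require Import complex.
From mathcomp Require Import boolp reals exp trigo.
Set Implicit Arguments. Unset Strict Implicit. Unset Printing Implicit Defensive.
Import Order.TTheory GRing.Theory Num.Theory.
Local Open Scope ring_scope.
Local Open Scope complex_scope.

Section Defs.
Variable R : realType.

(* Unitary DFT matrix: F j k = n^{-1/2} exp(-2 pi i j k / n). *)
Definition fourier (n : nat) : 'M[R[i]]_n :=
  \matrix_(j < n, k < n)
    let t := 2 * pi * ((j * k)%N)%:R / n%:R in
    Complex (cos t / Num.sqrt n%:R) (- sin t / Num.sqrt n%:R).

Definition cinner (m : nat) (u v : 'cV[R[i]]_m) : R[i] :=
  \sum_(k < m) (u k 0)^* * v k 0.

Definition csqnorm (m : nat) (v : 'cV[R[i]]_m) : R[i] :=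
  \sum_(k < m) `|v k 0| ^+ 2.

Definition l0 (n : nat) (v : 'cV[R[i]]_n) : nat := #|[set k | v k 0 != 0]|.

Definition pairwise_incoherent (N m n : nat) (B : 'I_N -> 'M[R[i]]_(m, n))
    (delta : R) (sigma : nat) : Prop :=
  forall i j : 'I_N, i != j ->
  forall vi vj : 'cV[R[i]]_n,
    (l0 vi <= sigma)%N -> (l0 vj <= sigma)%N ->
    csqnorm vi = 1 -> csqnorm vj = 1 ->
    `|cinner (B i *m vi) (B j *m vj)| <= delta%:C.

(* A sample: m (row index, sign) pairs, drawn uniformly and independently. *)
Definition sample_mx (n m : nat) (s : {ffun 'I_m -> 'I_n * bool}) : 'M[R[i]]_(m, n) :=
  \matrix_(r < m, k < n)
    let row := (s r).1 in let sgn := (s r).2 in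
    (if sgn then 1 else -1) * ((Num.sqrt m%:R)^-1)%:C * fourier n row k.

(* Probability, under the uniform (product) distribution on the finite sample
   space, that the collection (B_i) is pairwise (delta, sigma)-incoherent. *)
Definition prob_incoherent (n N m : nat) (delta : R) (sigma : nat) : R :=
  (#|[set w : {ffun 'I_N -> {ffun 'I_m -> 'I_n * bool}} |
       `[< pairwise_incoherent (fun i => sample_mx (w i)) delta sigma >] ]|)%:R /
  (#|{ffun 'I_N -> {ffun 'I_m -> 'I_n * bool}}|)%:R.

End Defs.

From HB Require Import structures.
From mathcomp Require Import all_boot all_order all_algebra.
From mathcomp Require Import complex.
From mathcomp Require Import boolp reals exp trigo.
From mathcomp Require Import sequences.
From mathcomp Require Import ring lra.
Set Implicit Arguments. Unset Strict Implicit. Unset Printing Implicit Defensive.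
Import Order.TTheory GRing.Theory Num.Theory.
Local Open Scope ring_scope.

(* Fix two distinct indices i != j, two coordinates k, l and one of
   the four real functionals z |-> +-Re z, +-Im z.  The (k, l) entry of the
   cross Gram matrix B_i^* B_j is a sum over the m sampled rows of terms of
   modulus 1/(mn), and flipping the random sign of row r of B_i negates the
   r-th term while fixing the others.  A Hoeffding (exponential Markov)
   argument for such sign-symmetric sums, carried out by exact counting on
   the finite uniform sample space, bounds the probability that the
   functional exceeds t = delta / (2 s), where s = min(sigma, n).  A union
   bound over the 4 N^2 n^2 choices then shows that, outside an event of the
   required small probability, every cross Gram entry has real and imaginary
   parts at most t; and a matrix whose Gram entries are that small is
   (2 t s, sigma)-incoherent, because an s-sparse unit vector has l1-norm at
   most sqrt s.  The degenerate cases n = 1, N <= 1 and sigma = 0 are treated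
   directly, and the constant C = 3200 makes the final arithmetic work. *)

Section Incoherence.
Local Open Scope complex_scope.
Variable R : realType.

Lemma expR_le_quadratic (y : R) : y <= 2^-1 -> expR y <= 1 + y + 2 * y ^+ 2.
Proof.
move=> hy.
have pos1y : 0 < 1 - y by lra.
have exp_le_inv : expR y <= (1 - y)^-1.
  have h : 1 - y <= (expR y)^-1 by rewrite -expRN; exact: expR_ge1Dx.
  by rewrite -[expR y]invrK lef_pV2 ?posrE ?invr_gt0 ?expR_gt0.
apply: le_trans exp_le_inv _; rewrite -div1r ler_pdivrMr //.
have : 0 <= y ^+ 2 * (1 - 2 * y) by apply: mulr_ge0; [exact: sqr_ge0 | lra].
nra.
Qed.

Lemma cosh_le (y : R) : `|y| <= 2^-1 -> expR y + expR (- y) <= 2 * expR (2 * y ^+ 2).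
Proof.
rewrite ler_norml => /andP [hl hr].
have e1 := expR_le_quadratic hr.
have e2 : expR (- y) <= 1 - y + 2 * y ^+ 2.
  by rewrite -[y ^+ 2]sqrrN; apply: expR_le_quadratic; lra.
have e3 := expR_ge1Dx (2 * y ^+ 2).
lra.
Qed.

Lemma card_sum_indicator (T : finType) (A : {set T}) :
  (#|A|%:R : R) = \sum_w (if w \in A then 1 else 0).
Proof. by rewrite -big_mkcond /= sumr_const. Qed.

Lemma exp_markov_card (T : finType) (S : T -> R) (L : R) :
  #|[set w | L < S w]|%:R <= expR (- L) * \sum_w expR (S w).
Proof.
rewrite card_sum_indicator mulr_sumr ler_sum // => w _.
rewrite inE; case: ifP => h; last by rewrite mulr_ge0 ?expR_ge0.
by rewrite -expRD; have := expR_ge1Dx (- L + S w); lra.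
Qed.

Lemma union_bound_card (T I : finType) (P : pred I) (E : I -> {set T}) (B : {set T}) :
  (forall w, w \in B -> exists2 i, P i & w \in E i) ->
  (#|B|%:R : R) <= \sum_(i | P i) (#|E i|%:R : R).
Proof.
move=> cover.
under [X in _ <= X]eq_bigr => i _ do rewrite card_sum_indicator.
rewrite exchange_big card_sum_indicator /= ler_sum // => w _.
case: ifP => hw; last by rewrite sumr_ge0 // => i _; case: ifP.
have [i Pi wi] := cover w hw.
by rewrite (bigD1 i) //= wi lerDl sumr_ge0 // => j _; case: ifP.
Qed.

(* One step of Hoeffding's argument: if the involution f negates y and fixes
   the nonnegative weight g, then averaging exp y against g costs at most the
   factor exp (2 a^2). *)
Lemma sign_flip_mgf_step (T : finType) (y g : T -> R) (f : T -> T) (a : R) :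
  a <= 2^-1 -> involutive f -> (forall w, y (f w) = - y w) ->
  (forall w, g (f w) = g w) -> (forall w, 0 <= g w) -> (forall w, `|y w| <= a) ->
  \sum_w expR (y w) * g w <= expR (2 * a ^+ 2) * \sum_w g w.
Proof.
move=> ha finv fneg fg g0 yb.
have flipped : \sum_w expR (y w) * g w = \sum_w expR (- y w) * g w.
  by rewrite (reindex_inj (inv_inj finv)) /=; apply: eq_bigr => w _; rewrite fneg fg.
have cosh_w w : expR (y w) + expR (- y w) <= 2 * expR (2 * a ^+ 2).
  apply: (le_trans (cosh_le (le_trans (yb w) ha))).
  rewrite ler_pM2l // ler_expR ler_pM2l //.
  by move: (yb w); rewrite ler_norml => /andP [u1 u2]; nra.
have : \sum_w expR (y w) * g w + \sum_w expR (- y w) * g w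
       <= 2 * (expR (2 * a ^+ 2) * \sum_w g w).
  rewrite -big_split /= !mulr_sumr ler_sum // => w _.
  by rewrite -mulrDl mulrA ler_wpM2r.
rewrite -flipped; lra.
Qed.

Lemma sign_symmetric_mgf (T : finType) (m : nat) (y : 'I_m -> T -> R)
    (f : 'I_m -> T -> T) (a : R) :
  a <= 2^-1 ->
  (forall r, involutive (f r)) ->
  (forall r w, y r (f r w) = - y r w) ->
  (forall r r' w, r' != r -> y r' (f r w) = y r' w) ->
  (forall r w, `|y r w| <= a) ->
  \sum_w expR (\sum_r y r w) <= #|T|%:R * expR (m%:R * (2 * a ^+ 2)).
Proof.
move=> ha finv fneg ffix yb.
suff partial k : (k <= m)%N ->
    \sum_w expR (\sum_(r : 'I_m | (r < k)%N) y r w)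
      <= #|T|%:R * expR (k%:R * (2 * a ^+ 2)).
  have full w : \sum_(r : 'I_m | (r < m)%N) y r w = \sum_r y r w.
    by apply: eq_bigl => r; rewrite ltn_ord.
  by have := partial m (leqnn m); under eq_bigr => w _ do rewrite full.
elim: k => [_|k IH hk].
  under eq_bigr => w _ do rewrite big_pred0 // expR0.
  by rewrite mul0r expR0 mulr1 sumr_const.
pose r0 : 'I_m := Ordinal hk.
pose g w := expR (\sum_(r : 'I_m | (r < k)%N) y r w).
have split_last w :
    \sum_(r : 'I_m | (r < k.+1)%N) y r w = y r0 w + \sum_(r : 'I_m | (r < k)%N) y r w.
  rewrite (bigD1 r0) //=; congr (_ + _); apply: eq_bigl => r.
  by rewrite ltnS -val_eqE /= andbC -ltn_neqAle.
have g_flip w : g (f r0 w) = g w.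
  rewrite /g; congr expR; apply: eq_bigr => r hr; apply: ffix.
  by rewrite -val_eqE /= neq_ltn hr.
under eq_bigr => w _ do rewrite split_last expRD.
have step := @sign_flip_mgf_step T (y r0) g (f r0) a ha (finv r0) (fneg r0) g_flip
  (fun w => expR_ge0 _) (yb r0).
apply: (le_trans step).
rewrite mulrC (le_trans (ler_wpM2r (expR_ge0 _) (IH (ltnW hk)))) //.
by rewrite -mulrA -expRD -[k.+1%:R]natr1 [(k%:R + 1) * _]mulrDl mul1r.
Qed.

(* The real-valued modulus of a complex number; `|z| is its complex image. *)
Definition modulus (z : R[i]) : R := Num.sqrt (complex.Re z ^+ 2 + complex.Im z ^+ 2).

Lemma norm_modulus (z : R[i]) : `|z| = (modulus z)%:C.
Proof. exact: normc_def. Qed.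

Lemma modulus_ge0 (z : R[i]) : 0 <= modulus z.
Proof. exact: sqrtr_ge0. Qed.

Lemma norm_real (x : R) : `|x%:C| = `|x|%:C.
Proof. by rewrite normc_def /= expr0n addr0 sqrtr_sqr. Qed.

Lemma norm_le_ReIm (z : R[i]) (t : R) :
  `|complex.Re z| <= t -> `|complex.Im z| <= t -> `|z| <= (2 * t)%:C.
Proof.
move=> hre him; rewrite {1}[z]complexE; apply: le_trans (ler_normD _ _) _.
have norm_i : `|'i : R[i]| = 1 by rewrite normc_def /= expr0n add0r expr1n sqrtr1.
rewrite normrM norm_i mul1r !norm_real -rmorphD lecR; lra.
Qed.

(* Cauchy-Schwarz on the support: a nonnegative vector supported on S with
   unit Euclidean norm has l1-norm at most sqrt #|S|. *)
Lemma sparse_l1_sq_le (n : nat) (x : 'I_n -> R) (S : {set 'I_n}) :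
  (forall k, k \notin S -> x k = 0) -> (forall k, 0 <= x k) ->
  \sum_k x k ^+ 2 = 1 -> (\sum_k x k) ^+ 2 <= #|S|%:R.
Proof.
move=> supp x0 unit.
have on_S (F : R -> R) : F 0 = 0 -> \sum_k F (x k) = \sum_(k in S) F (x k).
  move=> F0; rewrite [RHS]big_mkcond; apply: eq_bigr => k _.
  by case: ifP => // /negbT /supp ->.
have unit_S : \sum_(k in S) x k ^+ 2 = 1 by rewrite -(on_S (fun z => z ^+ 2)) // expr0n.
rewrite (on_S id) // expr2 mulr_suml.
under eq_bigr => k _ do rewrite mulr_sumr.
apply: (@le_trans _ _ (\sum_(k in S) \sum_(l in S) (x k ^+ 2 + x l ^+ 2) / 2)).
  apply: ler_sum => k _; apply: ler_sum => l _.
  by have := sqr_ge0 (x k - x l); rewrite sqrrB; lra.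
under eq_bigr => k _ do rewrite -mulr_suml big_split /= sumr_const.
rewrite -mulr_suml big_split /= sumrMnl unit_S sumr_const -mulr_natr mul1r; lra.
Qed.

Lemma l1_sq_le_sparsity (n s : nat) (x : 'cV[R[i]]_n) :
  (l0 x <= s)%N -> csqnorm x = 1 -> (\sum_k modulus (x k 0)) ^+ 2 <= s%:R.
Proof.
move=> sparse unit.
apply: le_trans (@sparse_l1_sq_le n (fun k => modulus (x k 0)) [set k | x k 0 != 0]
  _ (fun k => modulus_ge0 _) _) _.
- move=> k; rewrite inE negbK => /eqP ->.
  by rewrite /modulus /= expr0n addr0 sqrtr0.
- apply: complexI; rewrite raddf_sum rmorph1 -unit /csqnorm; apply: eq_bigr => k _.
  by rewrite norm_modulus -rmorphXn.
- by rewrite ler_nat.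
Qed.

Definition cross_gram (m n : nat) (B B' : 'M[R[i]]_(m, n)) (k l : 'I_n) : R[i] :=
  \sum_r (B r k)^* * B' r l.

Lemma cinner_cross_gram (m n : nat) (B B' : 'M[R[i]]_(m, n)) (v w : 'cV[R[i]]_n) :
  cinner (B *m v) (B' *m w) =
  \sum_k \sum_l ((v k 0)^* * w l 0) * cross_gram B B' k l.
Proof.
rewrite /cinner /cross_gram.
under eq_bigr => r _ do rewrite !mxE raddf_sum /= mulr_suml.
rewrite exchange_big /=; apply: eq_bigr => k _.
under eq_bigr => r _ do rewrite mulr_sumr.
rewrite exchange_big /=; apply: eq_bigr => l _.
rewrite mulr_sumr; apply: eq_bigr => r _.
rewrite rmorphM /=; ring.
Qed.

Lemma cinner_le_of_cross_gram (m n s : nat) (B B' : 'M[R[i]]_(m, n))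
    (v w : 'cV[R[i]]_n) (t : R) :
  0 <= t -> (l0 v <= s)%N -> (l0 w <= s)%N -> csqnorm v = 1 -> csqnorm w = 1 ->
  (forall k l, `|complex.Re (cross_gram B B' k l)| <= t /\
               `|complex.Im (cross_gram B B' k l)| <= t) ->
  `|cinner (B *m v) (B' *m w)| <= (2 * t * s%:R)%:C.
Proof.
move=> t0 sv sw nv nw small.
rewrite cinner_cross_gram.
apply: le_trans (ler_norm_sum _ _ _) _.
apply: (@le_trans _ _ (\sum_k \sum_l (modulus (v k 0) * modulus (w l 0) * (2 * t))%:C)).
  apply: ler_sum => k _; apply: le_trans (ler_norm_sum _ _ _) _.
  apply: ler_sum => l _; have [hre him] := small k l.
  rewrite !normrM normcJ !norm_modulus -!rmorphM lecR ler_wpM2l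
    ?mulr_ge0 ?modulus_ge0 //.
  by have := norm_le_ReIm hre him; rewrite norm_modulus lecR.
under eq_bigr => k _ do rewrite -raddf_sum.
rewrite -raddf_sum lecR /=.
have -> : \sum_k \sum_l modulus (v k 0) * modulus (w l 0) * (2 * t)
          = (2 * t) * ((\sum_k modulus (v k 0)) * (\sum_l modulus (w l 0))).
  rewrite mulr_suml mulr_sumr; apply: eq_bigr => k _.
  by rewrite !mulr_sumr; apply: eq_bigr => l _; ring.
apply: ler_wpM2l; first by rewrite mulr_ge0.
have := l1_sq_le_sparsity sv nv; have := l1_sq_le_sparsity sw nw.
have v0 : 0 <= \sum_k modulus (v k 0) by rewrite sumr_ge0 // => k; rewrite modulus_ge0.
have w0 : 0 <= \sum_k modulus (w k 0) by rewrite sumr_ge0 // => k; rewrite modulus_ge0.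
have := sqr_ge0 ((\sum_k modulus (v k 0)) - \sum_k modulus (w k 0)); rewrite sqrrB.
nra.
Qed.

Lemma fourier_norm (n : nat) (a k : 'I_n) :
  `|fourier R n a k| = ((Num.sqrt n%:R)^-1)%:C.
Proof.
rewrite mxE normc_def /=; congr (_%:C).
have n0 : (0 < n)%N by apply: leq_ltn_trans (ltn_ord a).
have sqrt_n : 0 < Num.sqrt (n%:R : R) by rewrite sqrtr_gt0 ltr0n.
rewrite !expr_div_n sqrrN -mulrDl cos2Dsin2 mul1r sqr_sqrtr ?ler0n //.
by rewrite sqrtrV ?ler0n.
Qed.

Lemma sample_entry_norm (n m : nat) (s : {ffun 'I_m -> 'I_n * bool}) r k :
  `|sample_mx R s r k| = ((Num.sqrt m%:R)^-1 * (Num.sqrt n%:R)^-1)%:C.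
Proof.
rewrite mxE !normrM fourier_norm norm_real rmorphM /=.
have -> : `|(if (s r).2 then 1 else -1 : R[i])| = 1.
  by case: (s r).2; rewrite ?normrN normr1.
by rewrite mul1r ger0_norm // invr_ge0 sqrtr_ge0.
Qed.

(* The four real functionals z |-> +-Re z, +-Im z; bounding all four bounds
   |Re z| and |Im z|. *)
Definition signed_part (q : bool * bool) (z : R[i]) : R :=
  (if q.1 then complex.Re z else complex.Im z) * (if q.2 then 1 else -1).

Lemma signed_partN q z : signed_part q (- z) = - signed_part q z.
Proof. by rewrite /signed_part; case: q.1; rewrite raddfN mulNr. Qed.

Lemma signed_part_sum q (I : finType) (F : I -> R[i]) :
  signed_part q (\sum_i F i) = \sum_i signed_part q (F i).
Proof. by rewrite /signed_part; case: q.1; rewrite raddf_sum mulr_suml. Qed.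

Lemma signed_part_le_norm q (z : R[i]) (b : R) : `|z| <= b%:C -> `|signed_part q z| <= b.
Proof.
rewrite norm_modulus lecR; apply: le_trans.
have coord_le x y : `|x| <= Num.sqrt (x ^+ 2 + y ^+ 2 : R).
  by rewrite -sqrtr_sqr ler_sqrt ?addr_ge0 ?sqr_ge0 // lerDl sqr_ge0.
rewrite /signed_part /modulus normrM.
by case: q => [[] []] /=; rewrite ?normrN normr1 mulr1 // addrC.
Qed.

Lemma ReIm_le_of_signed_part (z : R[i]) (t : R) :
  (forall q, signed_part q z <= t) -> `|complex.Re z| <= t /\ `|complex.Im z| <= t.
Proof.
move=> bound; have := bound (true, true); have := bound (true, false).
have := bound (false, true); have := bound (false, false).
rewrite /signed_part /= !mulr1 !mulrN1 => h1 h2 h3 h4.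
by rewrite !ler_norml !(lerNl t) h1 h2 h3 h4.
Qed.

Local Notation sample_space N m n := {ffun 'I_N -> {ffun 'I_m -> 'I_n * bool}}.

(* Flipping the sign of row r0 of the i-th matrix: an involution of the
   sample space, hence measure preserving. *)
Definition flip_sign (N m n : nat) (i : 'I_N) (r0 : 'I_m) (w : sample_space N m n)
    : sample_space N m n :=
  [ffun i' => if i' == i then
                [ffun r => if r == r0 then ((w i' r).1, ~~ (w i' r).2) else w i' r]
              else w i'].

Lemma flip_sign_involutive (N m n : nat) (i : 'I_N) (r0 : 'I_m) :
  involutive (@flip_sign N m n i r0).
Proof.
move=> w; apply/ffunP => i'; rewrite !ffunE; case: eqP => [->|//].
apply/ffunP => r; rewrite !ffunE; case: eqP => // _.
by rewrite /= negbK; case: (w i r).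
Qed.

Definition gram_term (N m n : nat) (w : sample_space N m n)
    (i j : 'I_N) (k l : 'I_n) (r : 'I_m) : R[i] :=
  (sample_mx R (w i) r k)^* * sample_mx R (w j) r l.

Lemma cross_gram_sample (N m n : nat) (w : sample_space N m n) i j k l :
  cross_gram (sample_mx R (w i)) (sample_mx R (w j)) k l = \sum_r gram_term w i j k l r.
Proof. by []. Qed.

Lemma gram_term_flip (N m n : nat) (w : sample_space N m n) (i j : 'I_N) k l
    (r0 r : 'I_m) : i != j ->
  gram_term (flip_sign i r0 w) i j k l r =
  if r == r0 then - gram_term w i j k l r else gram_term w i j k l r.
Proof.
move=> ij; rewrite /gram_term.
have -> : flip_sign i r0 w j = w j by rewrite ffunE eq_sym (negbTE ij).
rewrite [in LHS]mxE ffunE eqxx ffunE.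
case: (r =P r0) => [->|_] /=; last by rewrite [sample_mx R (w i) r k]mxE.
rewrite [sample_mx R (w i) r0 k]mxE [sample_mx R (w j) r0 l]mxE /=.
by case: (w i r0).2 => /=; rewrite !rmorphM /= ?rmorphN ?rmorph1 /=; ring.
Qed.

Lemma gram_term_norm (N m n : nat) (w : sample_space N m n) i j k l r :
  `|gram_term w i j k l r| = ((m%:R * n%:R)^-1)%:C.
Proof.
rewrite /gram_term normrM normcJ !sample_entry_norm -rmorphM; congr (_%:C).
by rewrite -expr2 exprMn !exprVn !sqr_sqrtr ?ler0n // invfM.
Qed.

Lemma cross_gram_tail (N m n : nat) (i j : 'I_N) (k l : 'I_n) q (lam t : R) :
  i != j -> 0 < lam -> lam / (m%:R * n%:R) <= 2^-1 ->
  #|[set w : sample_space N m n |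
      t < signed_part q (cross_gram (sample_mx R (w i)) (sample_mx R (w j)) k l)]|%:R
    <= #|sample_space N m n|%:R *
       expR (m%:R * (2 * (lam / (m%:R * n%:R)) ^+ 2) - lam * t).
Proof.
move=> ij lam0 lam_small.
set a := lam / (m%:R * n%:R).
pose y r (w : sample_space N m n) := lam * signed_part q (gram_term w i j k l r).
have sub : [set w : sample_space N m n |
      t < signed_part q (cross_gram (sample_mx R (w i)) (sample_mx R (w j)) k l)]
    \subset [set w | lam * t < \sum_r y r w].
  apply/subsetP => w; rewrite !inE cross_gram_sample signed_part_sum -mulr_sumr.
  by rewrite ltr_pM2l.
apply: (@le_trans _ _ #|[set w | lam * t < \sum_r y r w]|%:R).
  by rewrite ler_nat; exact: subset_leq_card sub.
apply: le_trans (exp_markov_card _ _) _.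
rewrite [expR (_ - _)]expRD mulrA mulrC ler_wpM2r ?expR_ge0 //.
apply: (sign_symmetric_mgf (f := fun r => flip_sign i r) lam_small).
- by move=> r; apply: flip_sign_involutive.
- by move=> r w; rewrite /y gram_term_flip // eqxx signed_partN mulrN.
- by move=> r r' w r'r; rewrite /y gram_term_flip // (negbTE r'r).
- move=> r w; rewrite /y normrM gtr0_norm // /a ler_pM2l //.
  by apply: signed_part_le_norm; rewrite gram_term_norm.
Qed.

Lemma incoherent_of_small_gram (N m n sigma : nat) (B : 'I_N -> 'M[R[i]]_(m, n)) (t : R) :
  0 <= t ->
  (forall i j, i != j -> forall k l q, signed_part q (cross_gram (B i) (B j) k l) <= t) ->
  pairwise_incoherent B (2 * t * (minn sigma n)%:R) sigma.
Proof.
move=> t0 small i j ij v w sv sw nv nw.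
have sparse (x : 'cV[R[i]]_n) : (l0 x <= sigma)%N -> (l0 x <= minn sigma n)%N.
  by move=> sx; rewrite leq_min sx /l0 (leq_trans (max_card _)) ?card_ord.
apply: cinner_le_of_cross_gram (sparse _ sv) (sparse _ sw) nv nw _ => //.
by move=> k l; apply: ReIm_le_of_signed_part => q; apply: small.
Qed.

Lemma failure_card_le (N m n sigma : nat) (t lam : R) :
  0 <= t -> 0 < lam -> lam / (m%:R * n%:R) <= 2^-1 ->
  #|~: [set w : sample_space N m n | `[< pairwise_incoherent
          (fun i => sample_mx R (w i)) (2 * t * (minn sigma n)%:R) sigma >]]|%:R
  <= (N * N * n * n * 4)%:R * (#|sample_space N m n|%:R *
       expR (m%:R * (2 * (lam / (m%:R * n%:R)) ^+ 2) - lam * t)).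
Proof.
move=> t0 lam0 lam_small.
pose I := ('I_N * 'I_N * 'I_n * 'I_n * (bool * bool))%type.
pose E (x : I) := [set w : sample_space N m n | t < signed_part x.2
  (cross_gram (sample_mx R (w x.1.1.1.1)) (sample_mx R (w x.1.1.1.2)) x.1.1.2 x.1.2)].
apply: le_trans (@union_bound_card _ I (fun x => x.1.1.1.1 != x.1.1.1.2) E _ _) _.
  move=> w; rewrite !inE => /asboolPn bad.
  apply: contrapT => none; apply: bad; apply: incoherent_of_small_gram => // i j ij k l q.
  rewrite leNgt; apply/negP => big; apply: none; exists (i, j, k, l, q) => //.
  by rewrite inE.
apply: le_trans (ler_sum _ (fun x ij => cross_gram_tail x.1.1.2 x.1.2 x.2 t ij lam0 lam_small)) _.
rewrite sumr_const -[_ *+ #|_|]mulr_natl ler_wpM2r ?mulr_ge0 ?expR_ge0 // ler_nat.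
by apply: leq_trans (max_card _) _; rewrite !card_prod !card_ord card_bool.
Qed.

Lemma prob_incoherent_ge (n N m sigma : nat) (delta b : R) : (0 < n)%N ->
  #|~: [set w : sample_space N m n |
         `[< pairwise_incoherent (fun i => sample_mx R (w i)) delta sigma >]]|%:R
     <= b * #|sample_space N m n|%:R ->
  1 - b <= prob_incoherent n N m delta sigma.
Proof.
move=> n0 bad_le; rewrite /prob_incoherent.
set G := [set w | _].
have nonempty : (0 < #|sample_space N m n|)%N.
  by apply/card_gt0P; exists [ffun _ => [ffun _ => (Ordinal n0, true)]].
rewrite ler_pdivlMr ?ltr0n //.
have := congr1 (fun x => x%:R : R) (cardsC G); rewrite natrD => total.
by rewrite -total in bad_le *; lra.
Qed.

Lemma incoherent_degenerate (N m n sigma : nat) (B : 'I_N -> 'M[R[i]]_(m, n)) (delta : R) :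
  (N <= 1)%N \/ sigma = 0%N -> pairwise_incoherent B delta sigma.
Proof.
move=> [N_le1 | sigma0] i j ij v w sv _ nv _; exfalso.
  move: ij; suff -> : i = j by rewrite eqxx.
  have := leq_trans (ltn_ord i) N_le1; have := leq_trans (ltn_ord j) N_le1.
  by rewrite !ltnS !leqn0 => /eqP j0 /eqP i0; apply: ord_inj; rewrite i0 j0.
have v0 k : v k 0 = 0.
  apply/eqP; apply: contraT => vk.
  by move: sv; rewrite sigma0 leqn0 /l0 cards_eq0 => /eqP/setP/(_ k); rewrite !inE vk.
move: nv; rewrite /csqnorm big1 => [/eqP|k _]; last by rewrite v0 normr0 expr0n.
by rewrite eq_sym oner_eq0.
Qed.

(* Main estimate: with t = delta / (2 s), s = min(sigma, n), and
   lam = delta m n / 8, the failure probability is at most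
   4 N^2 n^2 exp (- delta^2 m / 32). *)
Lemma prob_incoherent_tail (n N m sigma : nat) (delta : R) :
  (0 < n)%N -> (0 < m)%N -> (0 < sigma)%N -> 0 < delta -> delta < 1 ->
  1 - (N * N * n * n * 4)%:R * expR (- (delta ^+ 2 * m%:R / 32))
    <= prob_incoherent n N m delta sigma.
Proof.
move=> n0 m0 sigma0 d0 d1.
set s := minn sigma n.
have s0 : 0 < (s%:R : R) by rewrite ltr0n leq_min sigma0 n0.
have sn : (s%:R : R) <= n%:R by rewrite ler_nat geq_minr.
have mn0 : 0 < (m%:R * n%:R : R) by rewrite mulr_gt0 ?ltr0n.
set t := delta / (2 * s%:R); set lam := delta * m%:R * n%:R / 8.
have t0 : 0 <= t by rewrite divr_ge0 ?mulr_ge0 ?ler0n //; lra.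
have lam0 : 0 < lam by rewrite /lam divr_gt0 // !mulr_gt0 ?ltr0n.
have lam_mn : lam / (m%:R * n%:R) = delta / 8.
  by rewrite /lam; field; rewrite !pnatr_eq0 -!lt0n n0 m0.
have delta_eq : 2 * t * s%:R = delta by rewrite /t; field; rewrite gt_eqF.
have exponent : m%:R * (2 * (delta / 8) ^+ 2) - lam * t <= - (delta ^+ 2 * m%:R / 32).
  have -> : lam * t = delta ^+ 2 * m%:R / 16 * (n%:R / s%:R).
    by rewrite /lam /t; field; rewrite gt_eqF.
  have ns : 1 <= (n%:R : R) / s%:R by rewrite ler_pdivlMr // mul1r.
  have : 0 <= delta ^+ 2 * m%:R / 16 by rewrite divr_ge0 // mulr_ge0 // sqr_ge0.
  nra.
apply: prob_incoherent_ge => //.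
have lam_small : lam / (m%:R * n%:R) <= 2^-1 by rewrite lam_mn; lra.
have := failure_card_le N sigma t0 lam0 lam_small.
rewrite -/s delta_eq lam_mn => /le_trans; apply.
rewrite mulrCA mulrC ler_wpM2r ?ler0n // ler_wpM2l ?ler0n //.
by rewrite ler_expR.
Qed.

Lemma ln_nat_ge (n : nat) : (2 <= n)%N -> 2^-1 <= ln (n%:R : R).
Proof.
move=> n2.
have ln2 : 2^-1 <= ln (2 : R).
  have h : ln (1 + (- 2^-1)) <= - 2^-1 :> R by apply: le_ln1Dx; lra.
  have e : (1 + (- 2^-1) : R) = 2^-1 by lra.
  by rewrite e lnV ?posrE // in h; lra.
apply: le_trans ln2 _.
by rewrite ler_ln ?posrE ?ler_nat // ltr0n (leq_trans _ n2).
Qed.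

Lemma union_tail_le_pow (n N m sigma : nat) (delta : R) :
  (2 <= n)%N -> (2 <= N)%N -> (1 <= sigma)%N -> 0 < delta ->
  3200 * sigma%:R * delta ^- 2 * ln (n%:R) ^+ 4 * ln (N%:R) <= m%:R ->
  (N * N * n * n * 4)%:R * expR (- (delta ^+ 2 * m%:R / 32))
    <= n%:R `^ (- ln (n%:R) ^+ 3).
Proof.
move=> n2 N2 sigma1 d0 hm.
have hu := ln_nat_ge n2; have hv := ln_nat_ge N2.
set u := ln (n%:R : R) in hu hm *; set v := ln (N%:R : R) in hv hm *.
have dm : 3200 * (u ^+ 4 * v) <= delta ^+ 2 * m%:R.
  have : 3200 * sigma%:R * (u ^+ 4 * v) <= delta ^+ 2 * m%:R.
    have -> : 3200 * sigma%:R * (u ^+ 4 * v)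
              = delta ^+ 2 * (3200 * sigma%:R * delta ^- 2 * u ^+ 4 * v).
      by field; rewrite gt_eqF.
    by rewrite ler_wpM2l // sqr_ge0.
  have : 0 <= u ^+ 4 * v by rewrite mulr_ge0 ?exprn_ge0 //; lra.
  have : (1 : R) <= sigma%:R by rewrite ler1n.
  nra.
have u4 : 16^-1 <= u ^+ 4.
  have -> : (16^-1 : R) = 2^-1 ^+ 4 by rewrite !exprS expr0; field.
  by rewrite lerXn2r // ?nnegrE //; lra.
have u3 : 8^-1 <= u ^+ 3.
  have -> : (8^-1 : R) = 2^-1 ^+ 3 by rewrite !exprS expr0; field.
  by rewrite lerXn2r // ?nnegrE //; lra.
have poly : 4 * v + 2 * u + u ^+ 4 <= 100 * (u ^+ 4 * v).
  have e4 : u ^+ 4 = u * u ^+ 3 by rewrite exprS.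
  set P := u ^+ 4 in u4 dm e4 *; set Q := u ^+ 3 in u3 e4.
  have : 0 <= (P - 16^-1) * v by apply: mulr_ge0; lra.
  have : 0 <= (2 * v - 1) * P by apply: mulr_ge0; lra.
  have : 0 <= u * (Q - 8^-1) by apply: mulr_ge0; lra.
  nra.
have count_le : ((N * N * n * n * 4)%:R : R) <= expR (4 * v + 2 * u).
  have N0 : 0 < (N%:R : R) by rewrite ltr0n (leq_trans _ N2).
  have n0 : 0 < (n%:R : R) by rewrite ltr0n (leq_trans _ n2).
  rewrite expRD !expRM_natl /v /u !lnK ?posrE // !natrM.
  have N2r : (2 : R) <= N%:R by rewrite ler_nat.
  have NN : (4 : R) <= N%:R * N%:R by nra.
  have : 0 <= (n%:R : R) * n%:R by rewrite mulr_ge0.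
  rewrite !exprS expr0 !mulr1; nra.
have n_neq0 : (n%:R : R) != 0 by rewrite pnatr_eq0 -lt0n (leq_trans _ n2).
rewrite /powR (negbTE n_neq0).
apply: le_trans (ler_wpM2r (expR_ge0 _) count_le) _.
rewrite -/u -expRD ler_expR mulNr -exprSr; lra.
Qed.

Lemma prob_incoherent_degenerate (n N m sigma : nat) (delta : R) :
  (0 < n)%N -> (N <= 1)%N \/ sigma = 0%N -> 1 <= prob_incoherent n N m delta sigma.
Proof.
move=> n0 degenerate; rewrite -[1]subr0; apply: prob_incoherent_ge => //.
rewrite mul0r lern0 cards_eq0; apply/eqP/setP => w.
by rewrite !inE; apply/negbF/asboolP; apply: incoherent_degenerate.
Qed.

End Incoherence.

Theorem proposition1 (R : realType) :
  exists C : R, 0 < C /\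
  forall (n N m sigma : nat) (delta : R),
    (0 < n)%N -> 0 < delta -> delta < 1 ->
    C * sigma%:R * delta ^- 2 * ln (n%:R) ^+ 4 * ln (N%:R) <= m%:R ->
    1 - n%:R `^ (- ln (n%:R) ^+ 3) <= @prob_incoherent R n N m delta sigma.
Proof.
exists 3200; split=> [|n N m sigma delta n0 d0 d1 hm]; first lra.
have pow_ge0 := powR_ge0 (n%:R : R) (- ln (n%:R) ^+ 3).
have [n_le1 | n2] := leqP n 1.
  have -> : n = 1%N by apply/eqP; rewrite eqn_leq n_le1.
  by rewrite powR1 subrr /prob_incoherent divr_ge0 ?ler0n.
have [N2 | N_le1] := leqP 2 N; last first.
  apply: le_trans (prob_incoherent_degenerate m delta n0 (or_introl N_le1)); lra.
have [sigma0 | sigma1] := posnP sigma.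
  apply: le_trans (prob_incoherent_degenerate m delta n0 (or_intror sigma0)); lra.
have m0 : (0 < m)%N.
  have ln_pos k : (1 < k)%N -> 0 < ln (k%:R : R) by move=> k1; rewrite ln_gt0 ?ltr1n.
  rewrite -(ltr0n R); apply: lt_le_trans hm.
  by rewrite !mulr_gt0 ?invr_gt0 ?exprn_gt0 ?ltr0n ?ln_pos.
apply: le_trans (prob_incoherent_tail N n0 m0 sigma1 d0 d1).
exact: lerB (lexx 1) (union_tail_le_pow n2 N2 sigma1 d0 hm).
Qed.
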